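(* For all (well-formed, possibly open) call-by-value $\lambda$-terms $t$ and $s$, $t \approx_{\mathrm{nf}} s$ if and only if there exists a natural number $n > \max(\mathrm{fv}(t)\cup\mathrm{fv}(s))$ such that $\langle t, [], n\rangle_{\mathrm{ev}} \approx \langle s, [], n\rangle_{\mathrm{ev}}$, where $\approx$ is machine bisimilarity for the call-by-value NFB machine.
   Context: Terms: $t,s ::= f \mid x \mid \lambda x.t \mid t\,s$ and values $v ::= f \mid \lambda x.t$, where $f$ ranges over free variables (identified with natural numbers) and $x$ over bound variables; terms are well formed (every $x$ bound); $\mathrm{fv}(t)$ is the set of free variables. Stacks: $\pi ::= [\mathrm{arg}\ t]::\pi \mid [\mathrm{fun}\ v]::\pi \mid []$. CK machine configurations $\langle t,\pi\rangle_{\mathrm{ev}}$, $\langle \pi, v\rangle_{\mathrm{cont}}$, transitions: $\langle t\,s, \pi\rangle_{\mathrm{ev}} \to \langle t, [\mathrm{arg}\ s]::\pi\rangle_{\mathrm{ev}}$; $\langle v,\pi\rangle_{\mathrm{ev}}\to\langle\pi,v\rangle_{\mathrm{cont}}$; $\langle [\mathrm{arg}\ t]::\pi, v\rangle_{\mathrm{cont}} \to \langle t, [\mathrm{fun}\ v]::\pi\rangle_{\mathrm{ev}}$; $\langle [\mathrm{fun}\ \lambda x.t]::\pi, v\rangle_{\mathrm{cont}}\to\langle t\{v/x\},\pi\rangle_{\mathrm{ev}}$; $\to^*$ is the reflexive transitive closure. Normal-form bisimulation: a symmetric relation $\mathcal R$ on CK configurations such that $C\mathcal RC'$ implies (1)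 if $C\to^*\langle [], v\rangle_{\mathrm{cont}}$ then there is $v'$ with $C'\to^*\langle[],v'\rangle_{\mathrm{cont}}$ and for all fresh $f$, $\langle[\mathrm{fun}\ v]::[], f\rangle_{\mathrm{cont}}\,\mathcal R\,\langle[\mathrm{fun}\ v']::[], f\rangle_{\mathrm{cont}}$; (2) if $C\to^*\langle[\mathrm{fun}\ f]::\pi, v\rangle_{\mathrm{cont}}$ then there are $\pi',v'$ with $C'\to^*\langle[\mathrm{fun}\ f]::\pi',v'\rangle_{\mathrm{cont}}$ and for all fresh $f'$, $\langle[\mathrm{fun}\ v]::[],f'\rangle_{\mathrm{cont}}\,\mathcal R\,\langle[\mathrm{fun}\ v']::[],f'\rangle_{\mathrm{cont}}$ and $\langle\pi,f'\rangle_{\mathrm{cont}}\,\mathcal R\,\langle\pi',f'\rangle_{\mathrm{cont}}$. $\approx_{\mathrm{nf}}$ is the largest normal-form bisimulation on configurations, extended to terms by $t\approx_{\mathrm{nf}}s$ iff $\langle t,[]\rangle_{\mathrm{ev}}\approx_{\mathrm{nf}}\langle s,[]\rangle_{\mathrm{ev}}$. Call-by-value NFB machine: configurations $\langle t,\pi,n\rangle_{\mathrm{ev}}$ and $\langle\pi,v,n\rangle_{\mathrm{cont}}$ ($n\in\mathbb N$), plus, for each $\pi$, $v$, $n$, an intermediate configuration $I(\pi,v,n)$. Transitions: $\langle t\,s,\pi,n\rangle_{\mathrm{ev}}\xrightarrow\tau\langle t,[\mathrm{arg}\ s]::\pi,n\rangle_{\mathrm{ev}}$; $\langle v,\pi,n\rangle_{\mathrm{ev}}\xrightarrow\tau\langle\pi,v,n\rangle_{\mathrm{cont}}$;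 $\langle[\mathrm{arg}\ t]::\pi,v,n\rangle_{\mathrm{cont}}\xrightarrow\tau\langle t,[\mathrm{fun}\ v]::\pi,n\rangle_{\mathrm{ev}}$; $\langle[\mathrm{fun}\ \lambda x.t]::\pi,v,n\rangle_{\mathrm{cont}}\xrightarrow\tau\langle t\{v/x\},\pi,n\rangle_{\mathrm{ev}}$; $\langle[],v,n\rangle_{\mathrm{cont}}\xrightarrow{\lambda}\langle[\mathrm{fun}\ v]::[],n,n+1\rangle_{\mathrm{cont}}$; $\langle[\mathrm{fun}\ f]::\pi,v,n\rangle_{\mathrm{cont}}\xrightarrow{f}I(\pi,v,n)$ (flag is the number $f$), and $I(\pi,v,n)\xrightarrow{\mathsf{val}}\langle[\mathrm{fun}\ v]::[],n,n+1\rangle_{\mathrm{cont}}$, $I(\pi,v,n)\xrightarrow{\mathsf{ctx}}\langle\pi,n,n+1\rangle_{\mathrm{cont}}$. Machine bisimulation: a symmetric relation $\mathcal R$ on configurations such that $C_1\mathcal RC_2$ implies, for every flag $F$: if $C_1\xrightarrow\tau^*\xrightarrow F C_1'$ then $C_2\xrightarrow\tau^*\xrightarrow FC_2'$ for some $C_2'$ with $C_1'\mathcal RC_2'$, and if $C_1\xrightarrow\tau^*\xrightarrow F$ by a terminating transition, then so does $C_2$. $\approx$ is the largest machine bisimulation. *)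

(* Locally nameless representation of call-by-value lambda-terms:
   free variables f are natural numbers (TFree f), bound variables are
   de Bruijn indices (TBound i). *)
From Stdlib Require Import List Arith.
Import ListNotations.

Inductive term : Type :=
| TFree  (f : nat)
| TBound (i : nat)
| TLam   (t : term)
| TApp   (t s : term).

Fixpoint wf_at (k : nat) (t : term) : Prop :=
  match t with
  | TFree _ => True
  | TBound i => i < k
  | TLam b => wf_at (S k) b
  | TApp a b => wf_at k a /\ wf_at k b
  end.
Definition wf (t : term) : Prop := wf_at 0 t.

Fixpoint fv (t : term) : list nat :=
  match t with
  | TFree f => [f]
  | TBound _ => []
  | TLam b => fv b
  | TApp a b => fv a ++ fv b
  end.

Fixpoint open_rec (k : nat) (u : term) (t : term) : term :=
  match t with
  | TFree f => TFree f
  | TBound i => if Nat.eqb i k then u else TBound i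
  | TLam b => TLam (open_rec (S k) u b)
  | TApp a b => TApp (open_rec k u a) (open_rec k u b)
  end.
Definition open (body u : term) : term := open_rec 0 u body.

Inductive value : Type :=
| VFree (f : nat)
| VLam  (t : term).

Definition vterm (v : value) : term :=
  match v with VFree f => TFree f | VLam t => TLam t end.

Definition fv_value (v : value) : list nat := fv (vterm v).

Inductive frame : Type :=
| FArg (t : term)
| FFun (v : value).
Definition stack := list frame.

Definition fv_frame (fr : frame) : list nat :=
  match fr with FArg t => fv t | FFun v => fv_value v end.
Definition fv_stack (pi : stack) : list nat := flat_map fv_frame pi.

Inductive star {A : Type} (R : A -> A -> Prop) : A -> A -> Prop :=
| star_refl x : star R x x
| star_step x y z : R x y -> star R y z -> star R x z.

Inductive ck_config : Type :=
| CEv   (t : term) (pi : stack)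
| CCont (pi : stack) (v : value).

Definition fv_ck (C : ck_config) : list nat :=
  match C with
  | CEv t pi => fv t ++ fv_stack pi
  | CCont pi v => fv_stack pi ++ fv_value v
  end.

Inductive ck_step : ck_config -> ck_config -> Prop :=
| ck_app t s pi : ck_step (CEv (TApp t s) pi) (CEv t (FArg s :: pi))
| ck_val v pi : ck_step (CEv (vterm v) pi) (CCont pi v)
| ck_arg t pi v : ck_step (CCont (FArg t :: pi) v) (CEv t (FFun v :: pi))
| ck_beta t pi v :
    ck_step (CCont (FFun (VLam t) :: pi) v) (CEv (open t (vterm v)) pi).

(* normal-form bisimulation; "fresh" = not free in the two reached
   configurations *)
Definition is_nf_bisim (R : ck_config -> ck_config -> Prop) : Prop :=
  (forall C C', R C C' -> R C' C) /\
  (forall C C', R C C' ->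
     (forall v, star ck_step C (CCont [] v) ->
        exists v', star ck_step C' (CCont [] v') /\
          (forall f, ~ In f (fv_ck (CCont [] v)) -> ~ In f (fv_ck (CCont [] v')) ->
             R (CCont [FFun v] (VFree f)) (CCont [FFun v'] (VFree f)))) /\
     (forall f pi v, star ck_step C (CCont (FFun (VFree f) :: pi) v) ->
        exists pi' v', star ck_step C' (CCont (FFun (VFree f) :: pi') v') /\
          (forall f',
             ~ In f' (fv_ck (CCont (FFun (VFree f) :: pi) v)) ->
             ~ In f' (fv_ck (CCont (FFun (VFree f) :: pi') v')) ->
             R (CCont [FFun v] (VFree f')) (CCont [FFun v'] (VFree f')) /\
             R (CCont pi (VFree f')) (CCont pi' (VFree f'))))).

Definition nf_bisim (C C' : ck_config) : Prop :=
  exists R, is_nf_bisim R /\ R C C'.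

Definition nf_bisim_term (t s : term) : Prop :=
  nf_bisim (CEv t []) (CEv s []).

Inductive mconfig : Type :=
| MEv   (t : term) (pi : stack) (n : nat)
| MCont (pi : stack) (v : value) (n : nat)
| MInt  (pi : stack) (v : value) (n : nat).

Inductive flag : Type :=
| FlLam
| FlVar (f : nat)
| FlVal
| FlCtx.

Inductive label : Type :=
| Tau
| Flag (F : flag).

(* target None would denote a terminating transition; this machine has none *)
Inductive mstep : mconfig -> label -> option mconfig -> Prop :=
| m_app t s pi n :
    mstep (MEv (TApp t s) pi n) Tau (Some (MEv t (FArg s :: pi) n))
| m_val v pi n :
    mstep (MEv (vterm v) pi n) Tau (Some (MCont pi v n))
| m_arg t pi v n :
    mstep (MCont (FArg t :: pi) v n) Tau (Some (MEv t (FFun v :: pi) n))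
| m_beta t pi v n :
    mstep (MCont (FFun (VLam t) :: pi) v n) Tau (Some (MEv (open t (vterm v)) pi n))
| m_lam v n :
    mstep (MCont [] v n) (Flag FlLam) (Some (MCont [FFun v] (VFree n) (S n)))
| m_var f pi v n :
    mstep (MCont (FFun (VFree f) :: pi) v n) (Flag (FlVar f)) (Some (MInt pi v n))
| m_ival pi v n :
    mstep (MInt pi v n) (Flag FlVal) (Some (MCont [FFun v] (VFree n) (S n)))
| m_ictx pi v n :
    mstep (MInt pi v n) (Flag FlCtx) (Some (MCont pi (VFree n) (S n))).

Definition tau_step (C C' : mconfig) : Prop := mstep C Tau (Some C').

Definition is_machine_bisim (R : mconfig -> mconfig -> Prop) : Prop :=
  (forall C1 C2, R C1 C2 -> R C2 C1) /\
  (forall C1 C2, R C1 C2 -> forall F : flag,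
     (forall C1', (exists D1, star tau_step C1 D1 /\ mstep D1 (Flag F) (Some C1')) ->
        exists C2', (exists D2, star tau_step C2 D2 /\ mstep D2 (Flag F) (Some C2')) /\
                    R C1' C2') /\
     ((exists D1, star tau_step C1 D1 /\ mstep D1 (Flag F) None) ->
        exists D2, star tau_step C2 D2 /\ mstep D2 (Flag F) None)).

Definition machine_bisim (C1 C2 : mconfig) : Prop :=
  exists R, is_machine_bisim R /\ R C1 C2.

(* A normal-form bisimulation R lifts to a machine bisimulation relating the
   embeddings, at a counter n above all their free names, of R-related CK
   configurations, together with the intermediate configurations I(pi1,v1,n)
   and I(pi2,v2,n) whose two continuations are R-related at the name n.
   Conversely, CK configurations whose embeddings are machine-bisimilar at
   some counter above their free names form a normal-form bisimulation.

   The only gap is that the machine always continues with the name n, while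
   normal-form bisimilarity asks for every fresh f.  It is closed by renaming
   n to f and shifting the names above n past f: a renaming that commutes with
   the successor above the counter maps the transitions of a configuration
   exactly onto those of its image, so it preserves machine bisimilarity even
   when it is not injective. *)

From Stdlib Require Import List Arith Lia.
Import ListNotations.

Definition next (C : mconfig) : list (label * mconfig) :=
  match C with
  | MEv (TApp t s) pi n => [(Tau, MEv t (FArg s :: pi) n)]
  | MEv (TFree f) pi n => [(Tau, MCont pi (VFree f) n)]
  | MEv (TLam b) pi n => [(Tau, MCont pi (VLam b) n)]
  | MEv (TBound _) _ _ => []
  | MCont [] v n => [(Flag FlLam, MCont [FFun v] (VFree n) (S n))]
  | MCont (FArg t :: pi) v n => [(Tau, MEv t (FFun v :: pi) n)]
  | MCont (FFun (VLam t) :: pi) v n => [(Tau, MEv (open t (vterm v)) pi n)]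
  | MCont (FFun (VFree f) :: pi) v n => [(Flag (FlVar f), MInt pi v n)]
  | MInt pi v n => [(Flag FlVal, MCont [FFun v] (VFree n) (S n));
                    (Flag FlCtx, MCont pi (VFree n) (S n))]
  end.

Lemma mstep_next C l oC :
  mstep C l oC <-> exists C', oC = Some C' /\ In (l, C') (next C).
Proof.
  split.
  - destruct 1; try destruct v; simpl; eauto.
  - intros [C' [-> HC']].
    destruct C as [[f|i|b|t s] pi n|[|[t|[f|b]] pi] v n|pi v n]; simpl in HC';
      repeat destruct HC' as [HC'|HC']; try injection HC' as <- <-; try contradiction;
      solve [constructor | apply (m_val (VFree _)) | apply (m_val (VLam _))].
Qed.

Lemma mstep_none C l : ~ mstep C l None.
Proof. inversion 1. Qed.

Definition counter (C : mconfig) : nat :=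
  match C with MEv _ _ n | MCont _ _ n | MInt _ _ n => n end.

Lemma tau_step_counter C C' : tau_step C C' -> counter C' = counter C.
Proof. inversion 1; reflexivity. Qed.

Lemma star_tau_counter C D : star tau_step C D -> counter D = counter C.
Proof.
  induction 1 as [|C C' D HC _ IH]; [reflexivity|].
  rewrite IH; apply tau_step_counter, HC.
Qed.

Lemma mstep_counter_le C l C' : mstep C l (Some C') -> counter C <= counter C'.
Proof. inversion 1; simpl; lia. Qed.

Definition weak_step (C : mconfig) (F : flag) (C' : mconfig) : Prop :=
  exists D, star tau_step C D /\ mstep D (Flag F) (Some C').

Lemma weak_step_counter_le C F C' : weak_step C F C' -> counter C <= counter C'.
Proof.
  intros [D [HD HF]].
  rewrite <- (star_tau_counter _ _ HD); apply (mstep_counter_le _ _ _ HF).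
Qed.

Lemma is_machine_bisim_intro (R : mconfig -> mconfig -> Prop) :
  (forall C1 C2, R C1 C2 -> R C2 C1) ->
  (forall C1 C2 F C1', R C1 C2 -> weak_step C1 F C1' ->
     exists C2', weak_step C2 F C2' /\ R C1' C2') ->
  is_machine_bisim R.
Proof.
  intros Hsym Hsim; split; [exact Hsym|].
  intros C1 C2 H12 F; split.
  - intros C1' HC1'; exact (Hsim _ _ _ _ H12 HC1').
  - intros [D [_ HD]]; destruct (mstep_none _ _ HD).
Qed.

Lemma machine_bisim_sym C1 C2 : machine_bisim C1 C2 -> machine_bisim C2 C1.
Proof. intros [R [[Hsym Hsim] H12]]; exists R; split; [split|]; auto. Qed.

Lemma machine_bisim_weak_step C1 C2 F C1' :
  machine_bisim C1 C2 -> weak_step C1 F C1' ->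
  exists C2', weak_step C2 F C2' /\ machine_bisim C1' C2'.
Proof.
  intros [R [[Hsym Hsim] H12]] HC1'.
  destruct (proj1 (Hsim _ _ H12 F) C1' HC1') as [C2' [HC2' H12']].
  exists C2'; split; [exact HC2'|]; exists R; split; [split|]; auto.
Qed.

Section Renaming.

Variable rho : nat -> nat.

Fixpoint ren_term (t : term) : term :=
  match t with
  | TFree f => TFree (rho f)
  | TBound i => TBound i
  | TLam b => TLam (ren_term b)
  | TApp a b => TApp (ren_term a) (ren_term b)
  end.

Definition ren_value (v : value) : value :=
  match v with VFree f => VFree (rho f) | VLam t => VLam (ren_term t) end.

Definition ren_frame (fr : frame) : frame :=
  match fr with FArg t => FArg (ren_term t) | FFun v => FFun (ren_value v) end.

Definition ren_stack (pi : stack) : stack := map ren_frame pi.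

Definition ren_mconfig (C : mconfig) : mconfig :=
  match C with
  | MEv t pi n => MEv (ren_term t) (ren_stack pi) (rho n)
  | MCont pi v n => MCont (ren_stack pi) (ren_value v) (rho n)
  | MInt pi v n => MInt (ren_stack pi) (ren_value v) (rho n)
  end.

Definition ren_flag (F : flag) : flag :=
  match F with FlVar f => FlVar (rho f) | F => F end.

Definition ren_label (l : label) : label :=
  match l with Tau => Tau | Flag F => Flag (ren_flag F) end.

Lemma ren_term_open_rec k u t :
  ren_term (open_rec k u t) = open_rec k (ren_term u) (ren_term t).
Proof.
  revert k; induction t as [f|i|b IH|a IHa b IHb]; intros k; simpl.
  - reflexivity.
  - destruct (i =? k); reflexivity.
  - rewrite IH; reflexivity.
  - rewrite IHa, IHb; reflexivity.
Qed.

Lemma ren_term_vterm v : ren_term (vterm v) = vterm (ren_value v).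
Proof. destruct v; reflexivity. Qed.

Lemma next_ren C : rho (S (counter C)) = S (rho (counter C)) ->
  next (ren_mconfig C) =
  map (fun p => (ren_label (fst p), ren_mconfig (snd p))) (next C).
Proof.
  destruct C as [[f|i|b|t s] pi n|[|[t|[f|b]] pi] v n|pi v n]; simpl; intros HS;
    try rewrite HS; try reflexivity.
  unfold open; rewrite ren_term_open_rec, ren_term_vterm; reflexivity.
Qed.

Lemma ren_term_id t : (forall x, In x (fv t) -> rho x = x) -> ren_term t = t.
Proof.
  induction t as [f|i|b IH|a IHa b IHb]; simpl; intros Hid.
  - rewrite Hid; auto.
  - reflexivity.
  - rewrite IH; auto.
  - rewrite IHa, IHb; auto using in_or_app.
Qed.

Lemma ren_value_id v : (forall x, In x (fv_value v) -> rho x = x) -> ren_value v = v.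
Proof.
  destruct v as [f|b]; simpl; intros Hid.
  - rewrite Hid; simpl; auto.
  - rewrite ren_term_id; auto.
Qed.

Lemma ren_stack_id pi : (forall x, In x (fv_stack pi) -> rho x = x) -> ren_stack pi = pi.
Proof.
  induction pi as [|[t|v] pi IH]; simpl; intros Hid; [reflexivity| |].
  - rewrite ren_term_id, IH; auto using in_or_app.
  - rewrite ren_value_id, IH; auto using in_or_app.
Qed.

Variable n0 : nat.
Hypothesis rho_succ : forall k, n0 <= k -> rho (S k) = S (rho k).

Lemma mstep_ren C l C' : n0 <= counter C -> mstep C l (Some C') ->
  mstep (ren_mconfig C) (ren_label l) (Some (ren_mconfig C')).
Proof.
  intros Hn HC; apply mstep_next in HC as [? [[= <-] HC]].
  apply mstep_next; exists (ren_mconfig C'); split; [reflexivity|].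
  rewrite next_ren by auto.
  exact (in_map (fun p => (ren_label (fst p), ren_mconfig (snd p))) _ (l, C') HC).
Qed.

Lemma mstep_ren_inv C l X : n0 <= counter C -> mstep (ren_mconfig C) l (Some X) ->
  exists l0 C', mstep C l0 (Some C') /\ l = ren_label l0 /\ X = ren_mconfig C'.
Proof.
  intros Hn HX; apply mstep_next in HX as [? [[= <-] HX]].
  rewrite next_ren in HX by auto.
  apply in_map_iff in HX as [[l0 C'] [[= <- <-] HC']].
  exists l0, C'; repeat split; apply mstep_next; eauto.
Qed.

Lemma star_tau_ren C D : n0 <= counter C -> star tau_step C D ->
  star tau_step (ren_mconfig C) (ren_mconfig D).
Proof.
  intros Hn HD; induction HD as [|C C' D HC _ IH]; [constructor|].
  apply star_step with (ren_mconfig C'); [exact (mstep_ren _ Tau _ Hn HC)|].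
  apply IH; rewrite (tau_step_counter _ _ HC); exact Hn.
Qed.

Lemma star_tau_ren_inv C D : n0 <= counter C -> star tau_step (ren_mconfig C) D ->
  exists E, star tau_step C E /\ D = ren_mconfig E.
Proof.
  intros Hn HD; remember (ren_mconfig C) as X eqn:HX; revert C Hn HX.
  induction HD as [|X Y D HXY _ IH]; intros C Hn ->.
  - exists C; split; [constructor | reflexivity].
  - destruct (mstep_ren_inv _ _ _ Hn HXY) as [[|F] [C' [HC [Hl ->]]]]; [|discriminate Hl].
    destruct (IH C') as [E [HE ->]];
      [rewrite (tau_step_counter _ _ HC); exact Hn | reflexivity |].
    exists E; split; [econstructor; eauto | reflexivity].
Qed.

Lemma weak_step_ren C F C' : n0 <= counter C -> weak_step C F C' ->
  weak_step (ren_mconfig C) (ren_flag F) (ren_mconfig C').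
Proof.
  intros Hn [D [HD HF]]; exists (ren_mconfig D); split.
  - exact (star_tau_ren _ _ Hn HD).
  - apply (mstep_ren _ (Flag F)); [rewrite (star_tau_counter _ _ HD)|]; assumption.
Qed.

Lemma weak_step_ren_inv C F X : n0 <= counter C -> weak_step (ren_mconfig C) F X ->
  exists F0 C', weak_step C F0 C' /\ F = ren_flag F0 /\ X = ren_mconfig C'.
Proof.
  intros Hn [D [HD HF]].
  destruct (star_tau_ren_inv _ _ Hn HD) as [E [HE ->]].
  destruct (mstep_ren_inv _ _ _ (ltac:(rewrite (star_tau_counter _ _ HE); exact Hn)) HF)
    as [[|F0] [C' [HC' [[= ->] ->]]]].
  exists F0, C'; repeat split; exists E; auto.
Qed.

Lemma machine_bisim_ren C1 C2 :
  n0 <= counter C1 -> n0 <= counter C2 -> machine_bisim C1 C2 ->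
  machine_bisim (ren_mconfig C1) (ren_mconfig C2).
Proof.
  intros H1 H2 H12.
  exists (fun X Y => exists C1 C2, machine_bisim C1 C2 /\
            n0 <= counter C1 /\ n0 <= counter C2 /\
            X = ren_mconfig C1 /\ Y = ren_mconfig C2).
  split; [apply is_machine_bisim_intro|eauto 10].
  - intros X Y (C1' & C2' & H & Hn1 & Hn2 & -> & ->).
    exists C2', C1'; auto using machine_bisim_sym.
  - intros X Y F X' (C1' & C2' & H & Hn1 & Hn2 & -> & ->) HX'.
    destruct (weak_step_ren_inv _ _ _ Hn1 HX') as (F0 & D1 & HD1 & -> & ->).
    destruct (machine_bisim_weak_step _ _ _ _ H HD1) as (D2 & HD2 & H').
    exists (ren_mconfig D2); split; [exact (weak_step_ren _ _ _ Hn2 HD2)|].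
    pose proof (weak_step_counter_le _ _ _ HD1).
    pose proof (weak_step_counter_le _ _ _ HD2).
    exists D1, D2; repeat split; auto; lia.
Qed.

End Renaming.

Definition embed (c : ck_config) (n : nat) : mconfig :=
  match c with CEv t pi => MEv t pi n | CCont pi v => MCont pi v n end.

Lemma star_ck_tau c c' n : star ck_step c c' -> star tau_step (embed c n) (embed c' n).
Proof.
  induction 1 as [|c c1 c' Hc _ IH]; [constructor|].
  apply star_step with (embed c1 n); [destruct Hc; constructor | exact IH].
Qed.

Lemma tau_step_embed_inv c n X : tau_step (embed c n) X ->
  exists c', ck_step c c' /\ X = embed c' n.
Proof.
  intros HX; apply mstep_next in HX as [? [[= <-] HX]].
  destruct c as [[f|i|b|t s] pi|[|[t|[f|b]] pi] v]; simpl in HX;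
    repeat destruct HX as [HX|HX]; try injection HX as <-; try discriminate HX;
    try contradiction.
  - exists (CCont pi (VFree f)); split; [apply (ck_val (VFree f)) | reflexivity].
  - exists (CCont pi (VLam b)); split; [apply (ck_val (VLam b)) | reflexivity].
  - eexists; split; [constructor | reflexivity].
  - eexists; split; [constructor | reflexivity].
  - eexists; split; [constructor | reflexivity].
Qed.

Lemma star_tau_embed_inv c n D : star tau_step (embed c n) D ->
  exists d, star ck_step c d /\ D = embed d n.
Proof.
  intros HD; remember (embed c n) as X eqn:HX; revert c HX.
  induction HD as [|X Y D HXY _ IH]; intros c ->.
  - exists c; split; [constructor | reflexivity].
  - destruct (tau_step_embed_inv _ _ _ HXY) as [c' [Hc ->]].
    destruct (IH c' eq_refl) as [d [Hd ->]].
    exists d; split; [econstructor; eauto | reflexivity].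
Qed.

Lemma weak_step_embed_lam c v n : star ck_step c (CCont [] v) ->
  weak_step (embed c n) FlLam (MCont [FFun v] (VFree n) (S n)).
Proof.
  intros Hc; exists (MCont [] v n); split; [exact (star_ck_tau _ _ n Hc) | constructor].
Qed.

Lemma weak_step_embed_var c f pi v n : star ck_step c (CCont (FFun (VFree f) :: pi) v) ->
  weak_step (embed c n) (FlVar f) (MInt pi v n).
Proof.
  intros Hc; exists (MCont (FFun (VFree f) :: pi) v n); split;
    [exact (star_ck_tau _ _ n Hc) | constructor].
Qed.

Lemma weak_step_embed_inv c n F X : weak_step (embed c n) F X ->
  (F = FlLam /\ exists v, star ck_step c (CCont [] v) /\
                          X = MCont [FFun v] (VFree n) (S n)) \/
  (exists f pi v, F = FlVar f /\ star ck_step c (CCont (FFun (VFree f) :: pi) v) /\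
                  X = MInt pi v n).
Proof.
  intros [D [HD HX]].
  destruct (star_tau_embed_inv _ _ _ HD) as [d [Hd ->]].
  apply mstep_next in HX as [? [[= <-] HX]].
  destruct d as [[f|i|b|t s] pi|[|[t|[f|b]] pi] v]; simpl in HX;
    repeat destruct HX as [HX|HX]; try injection HX as <- <-; try discriminate HX;
    try contradiction.
  - left; eauto.
  - right; eauto 10.
Qed.

Lemma weak_step_int_val pi v n :
  weak_step (MInt pi v n) FlVal (MCont [FFun v] (VFree n) (S n)).
Proof. exists (MInt pi v n); split; constructor. Qed.

Lemma weak_step_int_ctx pi v n :
  weak_step (MInt pi v n) FlCtx (MCont pi (VFree n) (S n)).
Proof. exists (MInt pi v n); split; constructor. Qed.

Lemma weak_step_int_inv pi v n F X : weak_step (MInt pi v n) F X ->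
  (F = FlVal /\ X = MCont [FFun v] (VFree n) (S n)) \/
  (F = FlCtx /\ X = MCont pi (VFree n) (S n)).
Proof.
  intros [D [HD HX]].
  inversion HD as [|? Y ? HY]; subst; [|inversion HY].
  apply mstep_next in HX as [? [[= <-] HX]].
  simpl in HX; repeat destruct HX as [HX|HX]; try injection HX as <- <-; tauto.
Qed.

Lemma fv_open_rec_incl k u t : incl (fv (open_rec k u t)) (fv t ++ fv u).
Proof.
  intros x; rewrite in_app_iff; revert k.
  induction t as [f|i|b IH|a IHa b IHb]; intros k; simpl; try tauto.
  - destruct (i =? k); simpl; tauto.
  - apply IH.
  - rewrite !in_app_iff; intros [Hx|Hx]; [apply IHa in Hx | apply IHb in Hx]; tauto.
Qed.

Lemma ck_step_fv_incl c c' : ck_step c c' -> incl (fv_ck c') (fv_ck c).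
Proof.
  destruct 1 as [t s pi|v pi|t pi v|t pi v]; intros x; simpl; unfold fv_value;
    rewrite ?in_app_iff; simpl; try tauto.
  intros [Hx|Hx]; [apply fv_open_rec_incl in Hx; rewrite in_app_iff in Hx|]; tauto.
Qed.

Lemma star_ck_fv_incl c c' : star ck_step c c' -> incl (fv_ck c') (fv_ck c).
Proof.
  induction 1 as [|c c1 c' Hc _ IH]; [apply incl_refl|].
  exact (incl_tran IH (ck_step_fv_incl _ _ Hc)).
Qed.

Definition bounded (l : list nat) (m : nat) : Prop := forall x, In x l -> x < m.

Lemma bounded_incl l l' m : incl l' l -> bounded l m -> bounded l' m.
Proof. intros Hl Hb x Hx; exact (Hb x (Hl x Hx)). Qed.

Lemma bounded_app l1 l2 m : bounded (l1 ++ l2) m <-> bounded l1 m /\ bounded l2 m.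
Proof.
  split.
  - intros Hb; split; intros x Hx; apply Hb, in_app_iff; tauto.
  - intros [Hb1 Hb2] x Hx; apply in_app_iff in Hx as [Hx|Hx]; auto.
Qed.

Lemma bounded_app_comm l1 l2 m : bounded (l1 ++ l2) m -> bounded (l2 ++ l1) m.
Proof. rewrite !bounded_app; tauto. Qed.

Lemma bounded_notin l m : bounded l m -> ~ In m l.
Proof. intros Hb Hm; specialize (Hb m Hm); lia. Qed.

Lemma bounded_list_max l : bounded l (S (list_max l)).
Proof.
  intros x Hx; apply Nat.lt_succ_r.
  exact (proj1 (Forall_forall _ _) (proj1 (list_max_le l _) (le_n _)) x Hx).
Qed.

Lemma bounded_star c1 c2 d1 d2 m :
  star ck_step c1 d1 -> star ck_step c2 d2 ->
  bounded (fv_ck c1 ++ fv_ck c2) m -> bounded (fv_ck d1 ++ fv_ck d2) m.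
Proof.
  intros H1 H2; apply bounded_incl, incl_app_app; apply star_ck_fv_incl; assumption.
Qed.

Ltac incl_fv := intros ?x; unfold fv_ck, fv_stack, fv_value;
  repeat (simpl; rewrite ?app_nil_r, ?in_app_iff); tauto.

Lemma bounded_halt v1 v2 m :
  bounded (fv_ck (CCont [] v1) ++ fv_ck (CCont [] v2)) m ->
  bounded (fv_stack [FFun v1] ++ fv_stack [FFun v2]) m.
Proof. apply bounded_incl; incl_fv. Qed.

Lemma bounded_stuck f pi1 pi2 v1 v2 m :
  bounded (fv_ck (CCont (FFun (VFree f) :: pi1) v1) ++
           fv_ck (CCont (FFun (VFree f) :: pi2) v2)) m ->
  bounded (fv_ck (CCont pi1 v1) ++ fv_ck (CCont pi2 v2)) m.
Proof. apply bounded_incl; incl_fv. Qed.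

Lemma bounded_int_val pi1 pi2 v1 v2 m :
  bounded (fv_ck (CCont pi1 v1) ++ fv_ck (CCont pi2 v2)) m ->
  bounded (fv_stack [FFun v1] ++ fv_stack [FFun v2]) m.
Proof. apply bounded_incl; incl_fv. Qed.

Lemma bounded_int_ctx pi1 pi2 v1 v2 m :
  bounded (fv_ck (CCont pi1 v1) ++ fv_ck (CCont pi2 v2)) m ->
  bounded (fv_stack pi1 ++ fv_stack pi2) m.
Proof. apply bounded_incl; incl_fv. Qed.

Lemma bounded_plug pi1 pi2 f m m' :
  bounded (fv_stack pi1 ++ fv_stack pi2) m -> m <= m' -> f < m' ->
  bounded (fv_ck (CCont pi1 (VFree f)) ++ fv_ck (CCont pi2 (VFree f))) m'.
Proof.
  intros Hb Hm Hf x; simpl; rewrite !in_app_iff; simpl.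
  intros [[Hx|[<-|[]]]|[Hx|[<-|[]]]]; try assumption;
    assert (x < m) by (apply Hb, in_app_iff; tauto); lia.
Qed.

Definition fresh_ren (m f k : nat) : nat :=
  if k <? m then k else if k =? m then f else k + f.

Lemma fresh_ren_below m f k : k < m -> fresh_ren m f k = k.
Proof. intros Hk; unfold fresh_ren; destruct (Nat.ltb_spec k m); lia. Qed.

Lemma fresh_ren_fresh m f : fresh_ren m f m = f.
Proof. unfold fresh_ren; rewrite Nat.ltb_irrefl, Nat.eqb_refl; reflexivity. Qed.

Lemma fresh_ren_above m f k : m < k -> fresh_ren m f k = k + f.
Proof. intros Hk; unfold fresh_ren; destruct (Nat.ltb_spec k m), (Nat.eqb_spec k m); lia. Qed.

Lemma fresh_ren_succ m f k : S m <= k -> fresh_ren m f (S k) = S (fresh_ren m f k).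
Proof. intros Hk; rewrite !fresh_ren_above; lia. Qed.

Definition machine_bisim_ck (c1 c2 : ck_config) : Prop :=
  exists m, bounded (fv_ck c1 ++ fv_ck c2) m /\ machine_bisim (embed c1 m) (embed c2 m).

Lemma machine_bisim_ck_plug pi1 pi2 m f :
  bounded (fv_stack pi1 ++ fv_stack pi2) m ->
  machine_bisim (MCont pi1 (VFree m) (S m)) (MCont pi2 (VFree m) (S m)) ->
  machine_bisim_ck (CCont pi1 (VFree f)) (CCont pi2 (VFree f)).
Proof.
  intros Hb H12; exists (S m + f); split; [apply bounded_plug with m; [exact Hb|lia..]|].
  pose proof (machine_bisim_ren (fresh_ren m f) (S m) (fresh_ren_succ m f)
                (MCont pi1 (VFree m) (S m)) (MCont pi2 (VFree m) (S m))
                (le_n _) (le_n _) H12) as H.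
  apply bounded_app in Hb as [Hb1 Hb2].
  simpl in H; rewrite fresh_ren_fresh, fresh_ren_above in H by lia.
  rewrite !ren_stack_id in H; [exact H| |];
    intros x Hx; apply fresh_ren_below; auto.
Qed.

Lemma machine_bisim_ck_is_nf_bisim : is_nf_bisim machine_bisim_ck.
Proof.
  split; [intros c1 c2 [m [Hb H]]; exists m; auto using bounded_app_comm, machine_bisim_sym|].
  intros c1 c2 [m [Hb H]]; split.
  - intros v Hv.
    destruct (machine_bisim_weak_step _ _ _ _ H (weak_step_embed_lam _ _ m Hv))
      as [X [HX H']].
    destruct (weak_step_embed_inv _ _ _ _ HX) as [[_ [v' [Hv' ->]]] | (? & ? & ? & [=] & _)].
    exists v'; split; [exact Hv'|]; intros f _ _.
    pose proof (bounded_halt _ _ _ (bounded_star _ _ _ _ _ Hv Hv' Hb)) as Hb'.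
    exact (machine_bisim_ck_plug _ _ _ _ Hb' H').
  - intros f pi v Hv.
    destruct (machine_bisim_weak_step _ _ _ _ H (weak_step_embed_var _ _ _ _ m Hv))
      as [X [HX H']].
    destruct (weak_step_embed_inv _ _ _ _ HX)
      as [[[=] _] | (? & pi' & v' & [= <-] & Hv' & ->)].
    pose proof (bounded_stuck _ _ _ _ _ _ (bounded_star _ _ _ _ _ Hv Hv' Hb)) as Hb'.
    exists pi', v'; split; [exact Hv'|]; intros f' _ _; split.
    + destruct (machine_bisim_weak_step _ _ _ _ H' (weak_step_int_val pi v m)) as [Y [HY H'']].
      destruct (weak_step_int_inv _ _ _ _ _ HY) as [[_ ->]|[[=] _]].
      exact (machine_bisim_ck_plug _ _ _ _ (bounded_int_val _ _ _ _ _ Hb') H'').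
    + destruct (machine_bisim_weak_step _ _ _ _ H' (weak_step_int_ctx pi v m)) as [Y [HY H'']].
      destruct (weak_step_int_inv _ _ _ _ _ HY) as [[[=] _]|[_ ->]].
      exact (machine_bisim_ck_plug _ _ _ _ (bounded_int_ctx _ _ _ _ _ Hb') H'').
Qed.

Inductive nf_lift (R : ck_config -> ck_config -> Prop) : mconfig -> mconfig -> Prop :=
| nf_lift_embed c1 c2 m :
    bounded (fv_ck c1 ++ fv_ck c2) m -> R c1 c2 ->
    nf_lift R (embed c1 m) (embed c2 m)
| nf_lift_int pi1 v1 pi2 v2 m :
    bounded (fv_ck (CCont pi1 v1) ++ fv_ck (CCont pi2 v2)) m ->
    R (CCont [FFun v1] (VFree m)) (CCont [FFun v2] (VFree m)) ->
    R (CCont pi1 (VFree m)) (CCont pi2 (VFree m)) ->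
    nf_lift R (MInt pi1 v1 m) (MInt pi2 v2 m).

Section NfLift.

Variable R : ck_config -> ck_config -> Prop.
Hypothesis R_nf_bisim : is_nf_bisim R.

Lemma nf_lift_sym X Y : nf_lift R X Y -> nf_lift R Y X.
Proof.
  destruct R_nf_bisim as [Rsym _].
  destruct 1; constructor; auto using bounded_app_comm.
Qed.

Lemma nf_lift_plug pi1 pi2 m :
  bounded (fv_stack pi1 ++ fv_stack pi2) m ->
  R (CCont pi1 (VFree m)) (CCont pi2 (VFree m)) ->
  nf_lift R (MCont pi1 (VFree m) (S m)) (MCont pi2 (VFree m) (S m)).
Proof.
  intros Hb H12.
  exact (nf_lift_embed R (CCont pi1 (VFree m)) (CCont pi2 (VFree m)) (S m)
           (bounded_plug _ _ _ _ _ Hb (Nat.le_succ_diag_r m) (Nat.lt_succ_diag_r m)) H12).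
Qed.

Lemma nf_lift_simulates_embed c1 c2 m F X :
  bounded (fv_ck c1 ++ fv_ck c2) m -> R c1 c2 -> weak_step (embed c1 m) F X ->
  exists Y, weak_step (embed c2 m) F Y /\ nf_lift R X Y.
Proof.
  intros Hb H12 HX; destruct (proj2 R_nf_bisim _ _ H12) as [Hhalt Hstuck].
  destruct (weak_step_embed_inv _ _ _ _ HX)
    as [[-> [v [Hv ->]]] | (f & pi & v & -> & Hv & ->)].
  - destruct (Hhalt v Hv) as [v' [Hv' Hvv']].
    pose proof (bounded_star _ _ _ _ _ Hv Hv' Hb) as Hb'.
    exists (MCont [FFun v'] (VFree m) (S m)); split; [exact (weak_step_embed_lam _ _ _ Hv')|].
    apply nf_lift_plug; [exact (bounded_halt _ _ _ Hb')|].
    pose proof (proj1 (bounded_app _ _ _) Hb') as [Hb1 Hb2].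
    apply Hvv'; apply bounded_notin; assumption.
  - destruct (Hstuck f pi v Hv) as [pi' [v' [Hv' Hvv']]].
    pose proof (bounded_star _ _ _ _ _ Hv Hv' Hb) as Hb'.
    exists (MInt pi' v' m); split; [exact (weak_step_embed_var _ _ _ _ _ Hv')|].
    pose proof (proj1 (bounded_app _ _ _) Hb') as [Hb1 Hb2].
    destruct (Hvv' m) as [Hval Hctx]; try (apply bounded_notin; assumption).
    constructor; [exact (bounded_stuck _ _ _ _ _ _ Hb') | exact Hval | exact Hctx].
Qed.

Lemma nf_lift_simulates_int pi1 v1 pi2 v2 m F X :
  bounded (fv_ck (CCont pi1 v1) ++ fv_ck (CCont pi2 v2)) m ->
  R (CCont [FFun v1] (VFree m)) (CCont [FFun v2] (VFree m)) ->
  R (CCont pi1 (VFree m)) (CCont pi2 (VFree m)) ->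
  weak_step (MInt pi1 v1 m) F X ->
  exists Y, weak_step (MInt pi2 v2 m) F Y /\ nf_lift R X Y.
Proof.
  intros Hb Hval Hctx HX.
  destruct (weak_step_int_inv _ _ _ _ _ HX) as [[-> ->]|[-> ->]].
  - exists (MCont [FFun v2] (VFree m) (S m)); split; [apply weak_step_int_val|].
    exact (nf_lift_plug _ _ _ (bounded_int_val _ _ _ _ _ Hb) Hval).
  - exists (MCont pi2 (VFree m) (S m)); split; [apply weak_step_int_ctx|].
    exact (nf_lift_plug _ _ _ (bounded_int_ctx _ _ _ _ _ Hb) Hctx).
Qed.

Lemma nf_lift_is_machine_bisim : is_machine_bisim (nf_lift R).
Proof.
  apply is_machine_bisim_intro; [exact nf_lift_sym|].
  intros X Y F X' []; [apply nf_lift_simulates_embed | apply nf_lift_simulates_int];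
    assumption.
Qed.

End NfLift.

Theorem theorem6p3 (t s : term) :
  wf t -> wf s ->
  (nf_bisim_term t s <->
   exists n : nat,
     (forall f, In f (fv t ++ fv s) -> f < n) /\
     machine_bisim (MEv t nil n) (MEv s nil n)).
Proof.
  intros _ _; unfold nf_bisim_term; split.
  - intros [R [HR Hts]].
    set (n := S (list_max (fv t ++ fv s))).
    assert (Hn : bounded (fv t ++ fv s) n) by apply bounded_list_max.
    exists n; split; [exact Hn|].
    exists (nf_lift R); split; [exact (nf_lift_is_machine_bisim R HR)|].
    apply (nf_lift_embed R (CEv t []) (CEv s [])); [|exact Hts].
    simpl; rewrite !app_nil_r; exact Hn.
  - intros [n [Hn Hts]].
    exists machine_bisim_ck; split; [exact machine_bisim_ck_is_nf_bisim|].
    exists n; split; [simpl; rewrite !app_nil_r; exact Hn | exact Hts].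
Qed.
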